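(* Let $k\geq 1$ and $n\geq 2$ be integers, let $\Omega>0$ and $0<\sigma\leq m_{\min}$. Then there exist a positive discrete measure $\mu=\sum_{j=1}^{n}a_j\delta_{\mathbf y_j}$ on $\mathbb R^k$ with $n$ distinct supports $\mathbf y_j\in\mathbb R^k$ and amplitudes $a_j>0$, and a positive discrete measure $\hat \mu=\sum_{j=1}^{n-1}\hat a_j \delta_{\hat{\mathbf y}_j}$ on $\mathbb R^k$ with $n-1$ supports and amplitudes $\hat a_j>0$, such that \[ \max_{\boldsymbol\omega\in\mathbb R^k,\ \|\boldsymbol\omega\|_2\leq\Omega}\big|\mathcal F[\hat \mu](\boldsymbol\omega)-\mathcal F [\mu](\boldsymbol\omega)\big|< \sigma, \] and moreover \[ \min_{1\leq j\leq n}|a_j|= m_{\min}, \qquad \min_{p\neq j}\|\mathbf y_p-\mathbf y_j\|_2= \frac{2e^{-1}}{\Omega}\Big(\frac{\sigma}{m_{\min}}\Big)^{\frac{1}{2n-2}}. \]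
   Context: For a discrete measure $\nu=\sum_{j} c_j\delta_{\mathbf x_j}$ on $\mathbb R^k$, its Fourier transform is $\mathcal F[\nu](\boldsymbol\omega)=\sum_j c_j e^{i \mathbf x_j\cdot\boldsymbol\omega}$, $\boldsymbol\omega\in\mathbb R^k$. Here $\Omega>0$ is the cutoff frequency, $\sigma>0$ the noise level and $m_{\min}>0$ a prescribed minimal amplitude. *)

From HB Require Import structures.
From mathcomp Require Import all_boot all_order all_algebra.
From mathcomp Require Import all_classical all_reals all_analysis.
Set Implicit Arguments. Unset Strict Implicit. Unset Printing Implicit Defensive.
Import Order.TTheory GRing.Theory Num.Theory.
Local Open Scope ring_scope.

Definition dotv {R : realType} {k : nat} (x w : 'rV[R]_k) : R :=
  \sum_(i < k) x ord0 i * w ord0 i.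
Definition norm2 {R : realType} {k : nat} (x : 'rV[R]_k) : R :=
  Num.sqrt (\sum_(i < k) x ord0 i ^+ 2).

(* Fourier transform of the discrete measure nu = sum_j c_j delta_{x_j}:
   F[nu](w) = sum_j c_j e^{i x_j . w}, given by its real and imaginary parts. *)
Definition FT_re {R : realType} {k m : nat} (x : 'I_m -> 'rV[R]_k) (c : 'I_m -> R)
  (w : 'rV[R]_k) : R := \sum_(j < m) c j * cos (dotv (x j) w).
Definition FT_im {R : realType} {k m : nat} (x : 'I_m -> 'rV[R]_k) (c : 'I_m -> R)
  (w : 'rV[R]_k) : R := \sum_(j < m) c j * sin (dotv (x j) w).

Definition FT_diff_abs {R : realType} {k m1 m2 : nat}
  (x1 : 'I_m1 -> 'rV[R]_k) (c1 : 'I_m1 -> R)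
  (x2 : 'I_m2 -> 'rV[R]_k) (c2 : 'I_m2 -> R) (w : 'rV[R]_k) : R :=
  Num.sqrt ((FT_re x1 c1 w - FT_re x2 c2 w) ^+ 2 + (FT_im x1 c1 w - FT_im x2 c2 w) ^+ 2).

(* Take N := 2n - 2 and the N + 1 equispaced points i h e (0 <= i <= N) on the
   first coordinate axis e, with step h := e^-1 / Omega (sigma / mmin)^(1/N).
   The measure mu carries mmin C(N, i) at the even points and mu-hat carries
   mmin C(N, i) at the odd ones, so mu-hat - mu = - mmin sum_i (-1)^i C(N, i)
   delta_(i h e), whose Fourier transform at w is - mmin (1 - e^(i h w.e))^N.
   Since |1 - e^(it)| <= |t|, its modulus on the ball of radius Omega is at most
   mmin (h Omega)^N = e^-N sigma < sigma, while the support of mu is 2h-separated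
   and its smallest amplitude is mmin C(N, 0) = mmin. *)

From HB Require Import structures.
From mathcomp Require Import all_boot all_order all_algebra.
From mathcomp Require Import all_classical all_reals all_analysis.
From mathcomp Require Import complex ring.
Set Implicit Arguments. Unset Strict Implicit. Unset Printing Implicit Defensive.
Import Order.TTheory GRing.Theory Num.Theory.
Import numFieldNormedType.Exports.
Local Open Scope ring_scope.

Section Chord.
Variable R : realType.

Lemma abs_sin_le (x : R) : `|sin x| <= `|x|.
Proof.
wlog x_ge0 : x / 0 <= x.
  move=> Hwlog; have [/Hwlog //|/ltW x_le0] := lerP 0 x.
  by rewrite -normrN -sinN -(normrN x) Hwlog // oppr_ge0.
have [c _] := @MVT_segment R sin cos 0 x x_ge0 (fun y _ => is_derive_sin y)
  (@continuous_subspaceT _ _ _ _ (@continuous_sin R)).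
rewrite sin0 !subr0 => ->.
by rewrite normrM -[leRHS]mul1r ler_wpM2r // cos_max.
Qed.

(* [(1 - cos x)^2 + sin x^2 = 2 - 2 cos x = 4 sin (x/2)^2]. *)
Lemma chord_sqr_le (x : R) : (1 - cos x) ^+ 2 + sin x ^+ 2 <= x ^+ 2.
Proof.
have x2E : x = (x / 2) *+ 2 by rewrite -mulr_natr divfK // pnatr_eq0.
have -> : (1 - cos x) ^+ 2 + sin x ^+ 2 = 4 * sin (x / 2) ^+ 2.
  have sin2E (t : R) : sin t ^+ 2 = 1 - cos t ^+ 2.
    by rewrite -(cos2Dsin2 t); ring.
  rewrite !sin2E {1 2}x2E cos_mulr2n; ring.
have -> : x ^+ 2 = 4 * (x / 2) ^+ 2 by rewrite {1}x2E -mulr_natr; ring.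
rewrite ler_pM2l // -[leLHS]real_normK ?num_real // -[leRHS]real_normK ?num_real //.
by rewrite lerXn2r ?nnegrE ?abs_sin_le.
Qed.

End Chord.

Section ComplexExponential.
Variable R : realType.
Local Open Scope complex_scope.

Definition expi (t : R) : R[i] := cos t +i* sin t.

Lemma expiD (s t : R) : expi (s + t) = expi s * expi t.
Proof. by rewrite /expi cosD sinD; congr (_ +i* _); ring. Qed.

Lemma expiX (t : R) (n : nat) : expi t ^+ n = expi (n%:R * t).
Proof.
elim: n => [|n IH]; first by rewrite mul0r /expi cos0 sin0.
by rewrite exprSr IH -expiD -[in RHS]addn1 natrD mulrDl mul1r.
Qed.

Lemma norm_sub1_expi (t : R) : `|1 - expi t| <= `|t|%:C.
Proof.
rewrite normc_def lecR /= -sqrtr_sqr ler_sqrt ?sqr_ge0 //.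
by rewrite sub0r sqrrN chord_sqr_le.
Qed.

Definition FTc {k m : nat} (x : 'I_m -> 'rV[R]_k) (c : 'I_m -> R) (w : 'rV[R]_k) : R[i] :=
  \sum_(j < m) (c j)%:C * expi (dotv (x j) w).

Lemma Re_FTc {k m : nat} (x : 'I_m -> 'rV[R]_k) (c : 'I_m -> R) (w : 'rV[R]_k) :
  complex.Re (FTc x c w) = FT_re x c w.
Proof. by rewrite raddf_sum; apply: eq_bigr => j _ /=; rewrite mul0r subr0. Qed.

Lemma Im_FTc {k m : nat} (x : 'I_m -> 'rV[R]_k) (c : 'I_m -> R) (w : 'rV[R]_k) :
  complex.Im (FTc x c w) = FT_im x c w.
Proof. by rewrite raddf_sum; apply: eq_bigr => j _ /=; rewrite mul0r addr0. Qed.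

Lemma FT_diff_absE {k m1 m2 : nat} (x1 : 'I_m1 -> 'rV[R]_k) (c1 : 'I_m1 -> R)
    (x2 : 'I_m2 -> 'rV[R]_k) (c2 : 'I_m2 -> R) (w : 'rV[R]_k) :
  (FT_diff_abs x1 c1 x2 c2 w)%:C = `|FTc x1 c1 w - FTc x2 c2 w|.
Proof. by rewrite normc_def !raddfB /= !Re_FTc !Im_FTc. Qed.

End ComplexExponential.

Section EuclideanRow.
Variables (R : realType) (k : nat).
Implicit Types (x w : 'rV[R]_k) (c : R).

Lemma dotvZl c x w : dotv (c *: x) w = c * dotv x w.
Proof. by rewrite /dotv mulr_sumr; apply: eq_bigr => i _; rewrite mxE mulrA. Qed.

Lemma dotv_delta (i : 'I_k) w : dotv (delta_mx 0 i) w = w 0 i.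
Proof.
rewrite /dotv (bigD1 i) //= big1 => [|j /negbTE ji]; last by rewrite mxE ji andbF mul0r.
by rewrite mxE !eqxx mul1r addr0.
Qed.

Lemma norm2Z c x : norm2 (c *: x) = `|c| * norm2 x.
Proof.
rewrite /norm2 -sqrtr_sqr -sqrtrM ?sqr_ge0 // mulr_sumr.
by congr Num.sqrt; apply: eq_bigr => i _; rewrite mxE exprMn.
Qed.

Lemma norm2_delta (i : 'I_k) : norm2 (delta_mx 0 i : 'rV[R]_k) = 1.
Proof.
rewrite /norm2 (bigD1 i) //= big1 => [|j /negbTE ji]; last by rewrite mxE ji andbF expr0n.
by rewrite mxE !eqxx expr1n addr0 sqrtr1.
Qed.

Lemma abs_coord_le_norm2 w (i : 'I_k) : `|w 0 i| <= norm2 w.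
Proof.
rewrite -sqrtr_sqr /norm2 ler_sqrt; last by apply: sumr_ge0 => j _; exact: sqr_ge0.
by rewrite (bigD1 i) //= lerDl; apply: sumr_ge0 => j _; exact: sqr_ge0.
Qed.

End EuclideanRow.

Lemma big_ord_double_split (V : nmodType) (F : nat -> V) (m : nat) :
  \sum_(i < m.*2.+1) F i = \sum_(j < m.+1) F j.*2 + \sum_(j < m) F j.*2.+1.
Proof.
elim: m => [|m IH]; first by rewrite !big_ord1 big_ord0 addr0.
rewrite [LHS]big_ord_recr [in LHS]big_ord_recr /= IH.
rewrite [\sum_(j < m.+2) _]big_ord_recr [\sum_(j < m.+1) F j.*2.+1]big_ord_recr /=.
by rewrite -!addrA; congr (_ + _); rewrite [in RHS]addrC -addrA.
Qed.

Lemma natr_dist_ge1 (R : numDomainType) (p j : nat) : p != j -> 1 <= `|p%:R - j%:R : R|.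
Proof.
case: (ltngtP p j) => // [lt_pj|lt_jp] _.
  by rewrite distrC -natrB ?normr_nat ?ler1n ?subn_gt0 // ltnW.
by rewrite -natrB ?normr_nat ?ler1n ?subn_gt0 // ltnW.
Qed.

Section BinomialConfiguration.
Variables (R : realType) (k : nat) (e : 'rV[R]_k) (h c : R) (m : nat).

Definition even_pts (j : 'I_m.+1) : 'rV[R]_k := ((j.*2)%:R * h) *: e.
Definition even_wts (j : 'I_m.+1) : R := c * 'C(m.*2, j.*2)%:R.
Definition odd_pts (j : 'I_m) : 'rV[R]_k := ((j.*2.+1)%:R * h) *: e.
Definition odd_wts (j : 'I_m) : R := c * 'C(m.*2, j.*2.+1)%:R.

Lemma FTc_odd_sub_even (w : 'rV[R]_k) :
  FTc odd_pts odd_wts w - FTc even_pts even_wts w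
  = - ((c%:C * (1 - expi (h * dotv e w)) ^+ m.*2)%C).
Proof.
set t := h * dotv e w.
have ptE l : dotv ((l%:R * h) *: e) w = l%:R * t by rewrite dotvZl mulrA.
rewrite exprBn (big_ord_double_split
  (fun i => ((-1) ^+ i * 1 ^+ (m.*2 - i) * expi t ^+ i) *+ 'C(m.*2, i))).
rewrite mulrDr opprD [RHS]addrC /FTc; congr (_ - _).
  rewrite mulr_sumr -sumrN; apply: eq_bigr => j _.
  rewrite ptE -expiX -signr_odd /= odd_double /= rmorphM rmorph_nat /=.
  by rewrite expr1n -[in RHS]mulr_natr; ring.
rewrite mulr_sumr; apply: eq_bigr => j _.
rewrite ptE -expiX -signr_odd /= odd_double /= rmorphM rmorph_nat /=.
by rewrite expr1n -[in RHS]mulr_natr; ring.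
Qed.

Lemma FT_diff_abs_odd_even_le (w : 'rV[R]_k) : 0 <= c ->
  FT_diff_abs odd_pts odd_wts even_pts even_wts w <= c * `|h * dotv e w| ^+ m.*2.
Proof.
move=> c_ge0; rewrite -lecR FT_diff_absE FTc_odd_sub_even normrN normrM normrX.
rewrite ger0_norm ?ler0c // rmorphM rmorphXn /= ler_wpM2l ?ler0c //.
by rewrite lerXn2r ?nnegrE ?normr_ge0 ?ler0c ?normr_ge0 ?norm_sub1_expi.
Qed.

Lemma even_wts0 : even_wts ord0 = c.
Proof. by rewrite /even_wts bin0 mulr1. Qed.

Lemma even_wts_ge (j : 'I_m.+1) : 0 <= c -> c <= even_wts j.
Proof.
move=> c_ge0; rewrite -[leLHS]mulr1 ler_wpM2l // ler1n bin_gt0.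
by rewrite leq_double -ltnS.
Qed.

Lemma odd_wts_gt0 (j : 'I_m) : 0 < c -> 0 < odd_wts j.
Proof. by move=> c_gt0; rewrite mulr_gt0 // ltr0n bin_gt0 ltn_double. Qed.

Hypotheses (e_unit : norm2 e = 1) (h_gt0 : 0 < h).

Lemma norm2_even_pts_sub (p j : 'I_m.+1) :
  norm2 (even_pts p - even_pts j) = 2 * h * `|p%:R - j%:R|.
Proof.
rewrite /even_pts -scalerBl norm2Z e_unit mulr1 -mulrBl -!muln2 !natrM -mulrBl.
by rewrite !normrM (gtr0_norm h_gt0) normr_nat; ring.
Qed.

Lemma even_pts_sep (p j : 'I_m.+1) : p != j -> 2 * h <= norm2 (even_pts p - even_pts j).
Proof.
move=> pj; rewrite norm2_even_pts_sub ler_peMr ?natr_dist_ge1 //.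
by rewrite mulr_ge0 ?ltW.
Qed.

Lemma even_pts_inj : injective even_pts.
Proof.
move=> p j pj_eq; apply/eqP; apply: contraT => pj.
have := even_pts_sep pj; rewrite pj_eq norm2_even_pts_sub subrr normr0 mulr0.
by rewrite leNgt mulr_gt0.
Qed.

End BinomialConfiguration.

Lemma scaled_root_pow_lt (R : realType) (Omega sigma mmin : R) (N : nat) :
  0 < Omega -> 0 < sigma -> 0 < mmin -> (0 < N)%N ->
  mmin * (expR (-1) / Omega * (sigma / mmin) `^ (1 / N%:R) * Omega) ^+ N < sigma.
Proof.
move=> O_gt0 s_gt0 m_gt0 N_gt0.
have rootK : ((sigma / mmin) `^ (1 / N%:R)) ^+ N = sigma / mmin.
  have N_neq0 : N%:R != 0 :> R by rewrite pnatr_eq0 -lt0n.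
  rewrite -powR_mulrn ?powR_ge0 // -powRrM mul1r mulVf // powRr1 //.
  exact: divr_ge0 (ltW s_gt0) (ltW m_gt0).
rewrite mulrAC divfK ?gt_eqF // exprMn rootK mulrCA [mmin * _]mulrC divfK ?gt_eqF //.
have e_lt1 : expR (-1) < 1 :> R by rewrite expR_lt1 oppr_lt0.
by rewrite gtr_pMl // exprn_ilt1 ?expR_ge0 // -lt0n.
Qed.

Theorem theorem3p2 (R : realType) (k n : nat) (Omega sigma mmin : R) :
  (1 <= k)%N -> (2 <= n)%N -> 0 < Omega -> 0 < sigma -> sigma <= mmin ->
  exists (y : 'I_n -> 'rV[R]_k) (a : 'I_n -> R)
         (yh : 'I_n.-1 -> 'rV[R]_k) (ah : 'I_n.-1 -> R),
    injective y /\
    (forall j, 0 < a j) /\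
    (forall j, 0 < ah j) /\
    (forall w : 'rV[R]_k, norm2 w <= Omega -> FT_diff_abs yh ah y a w < sigma) /\
    ((exists j, `|a j| = mmin) /\ (forall j, mmin <= `|a j|)) /\
    (let d := 2 * expR (-1) / Omega * (sigma / mmin) `^ (1 / (2 * n - 2)%:R) in
     (exists p j, p != j /\ norm2 (y p - y j) = d) /\
     (forall p j, p != j -> d <= norm2 (y p - y j))).
Proof.
move=> k_gt0 n_ge2 O_gt0 s_gt0 s_le_m.
case: k k_gt0 => [//|k] _; case: n n_ge2 => [|[|m]] // _.
have m_gt0 : 0 < mmin := lt_le_trans s_gt0 s_le_m.
rewrite (_ : (2 * m.+2 - 2)%N = (m.+1).*2); last by rewrite mul2n.
pose h := expR (-1) / Omega * (sigma / mmin) `^ (1 / ((m.+1).*2)%:R).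
have h_gt0 : 0 < h by rewrite mulr_gt0 ?divr_gt0 ?expR_gt0 ?powR_gt0 ?divr_gt0.
have e_unit := norm2_delta R (0 : 'I_k.+1).
exists (even_pts (delta_mx 0 0) h (m:=m.+1)), (even_wts mmin (m:=m.+1)).
exists (odd_pts (delta_mx 0 0) h (m:=m.+1)), (odd_wts mmin (m:=m.+1)).
split; first exact: even_pts_inj.
have wts_ge (j : 'I_m.+2) : mmin <= even_wts mmin j := even_wts_ge j (ltW m_gt0).
split; first by move=> j; exact: lt_le_trans m_gt0 (wts_ge j).
split; first by move=> j; exact: odd_wts_gt0.
split.
  move=> w w_le_O; apply: le_lt_trans (FT_diff_abs_odd_even_le _ _ _ _ (ltW m_gt0)) _.
  apply: (le_lt_trans _ (scaled_root_pow_lt (N := (m.+1).*2) O_gt0 s_gt0 m_gt0 isT)).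
  rewrite ler_pM2l // -/h lerXn2r ?nnegrE ?normr_ge0 //.
    exact: mulr_ge0 (ltW h_gt0) (ltW O_gt0).
  rewrite dotv_delta normrM gtr0_norm // ler_pM2l //.
  exact: le_trans (abs_coord_le_norm2 _ _) w_le_O.
split.
  split; first by exists ord0; rewrite even_wts0 gtr0_norm.
  by move=> j; rewrite ger0_norm ?wts_ge // (le_trans (ltW m_gt0) (wts_ge j)).
move=> d; rewrite (_ : d = 2 * h); last by rewrite /d !mulrA.
split; last by move=> p j; exact: even_pts_sep.
exists ord0, (@Ordinal m.+2 1 isT); split => //.
by rewrite norm2_even_pts_sub //= sub0r normrN normr1 mulr1.
Qed.
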